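(* Let $G$ be a finite simple graph with $\alpha:=\alpha(G)\ge 2$. Let $C$ be a vertex cover of $G$ such that $S:=V(G)\setminus C$ satisfies $1\le |S|\le \alpha-1$. Let $H:=G(C)$ be the $C$-suspension of $G$. Then $G$ is pseudo-Gorenstein$^{*}$ if and only if $H$ is pseudo-Gorenstein$^{*}$.
   Context: A vertex cover of $G$ is a set $C\subseteq V(G)$ meeting every edge. For $\varnothing\ne C\subseteq V(G)$, the $C$-suspension $G(C)$ is the graph obtained from $G$ by adding a new vertex $z$ adjacent exactly to the vertices of $C$. For a finite simple graph $G$ on vertex set $[N]$, let $R=K[x_1,\dots,x_N]$ ($K$ a field) and $I(G)$ the edge ideal generated by $x_ix_j$, $\{i,j\}\in E(G)$. Let $\alpha(G)$ be the independence number (equal to $\dim R/I(G)$). Write the Hilbert series of $R/I(G)$ uniquely as $(h_0+\dots+h_st^s)/(1-t)^{\alpha(G)}$ with $h_s\ne 0$, and $\mathfrak a(G)=s-\alpha(G)$. $G$ is pseudo-Gorenstein$^{*}$ if $h_s=1$ and $\mathfrak a(G)=0$. *)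

From mathcomp Require Import all_boot all_order all_algebra.
Set Implicit Arguments. Unset Strict Implicit. Unset Printing Implicit Defensive.
Import GRing.Theory Num.Theory.

(* A finite simple graph on the finite vertex type T is a symmetric,
   irreflexive relation e : rel T (these are hypotheses of the theorem). *)

Definition independent (T : finType) (e : rel T) (A : {set T}) : bool :=
  [forall x in A, forall y in A, ~~ e x y].

Definition alpha (T : finType) (e : rel T) : nat :=
  \max_(A : {set T} | independent e A) #|A|.

Definition vertex_cover (T : finType) (e : rel T) (C : {set T}) : Prop :=
  forall x y, e x y -> (x \in C) || (y \in C).

Definition suspension (T : finType) (e : rel T) (C : {set T}) : rel (option T) :=
  fun u v => match u, v with
             | Some x, Some y => e x y
             | None, Some y => y \in C
             | Some x, None => x \in C
             | None, None => false
             end.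

(* Hilbert function of R/I(G) in degree d: dim_K (R/I(G))_d, i.e. the number of
   monomials x^m of degree d not in the monomial ideal I(G) (standard monomials:
   no edge {x,y} with x_x x_y dividing x^m).  Exponent vectors m : T -> nat with
   sum d; the values are bounded by d, hence typed in 'I_(d.+1). *)
Definition hilb_fun (T : finType) (e : rel T) (d : nat) : nat :=
  #|[set m : {ffun T -> 'I_d.+1} |
      (\sum_(x : T) (m x : nat) == d) &&
      [forall x, forall y, e x y ==> ((m x == 0 :> nat) || (m y == 0 :> nat))]]|.

(* Coefficients of the numerator h(t) = (1-t)^alpha * sum_d H(d) t^d of the
   Hilbert series HS(t) = h(t)/(1-t)^alpha(G). *)
Definition hcoef (T : finType) (e : rel T) (k : nat) : int :=
  (\sum_(j < k.+1)
     (-1) ^+ j * (('C(alpha e, j) * hilb_fun e (k - j))%N)%:Z)%R.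

(* pseudo-Gorenstein^*: the last nonzero coefficient h_s equals 1 and
   a(G) = s - alpha(G) = 0, i.e. s = alpha(G). *)
Definition pseudo_gor_star (T : finType) (e : rel T) : Prop :=
  hcoef e (alpha e) = 1%R /\ (forall k, alpha e < k -> hcoef e k = 0%R).

From mathcomp Require Import all_boot all_order all_algebra.
From mathcomp Require Import ring zify.
Import GRing.Theory Num.Theory.

Set Implicit Arguments.
Unset Strict Implicit.
Unset Printing Implicit Defensive.

(* Adding a vertex z with neighbourhood C keeps the independence number: an
   independent set through z lies in {z} u S, and |S| < alpha.  The standard
   monomials of H are those of G together with the monomials divisible by z and
   supported on {z} u S, whose generating series is t/(1-t)^(|S|+1).  Multiplied
   by (1-t)^alpha this becomes t(1-t)^(alpha-|S|-1), a polynomial of degree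
   alpha-|S| < alpha, so G and H have the same h-coefficients in degrees
   >= alpha.  The series are handled as polynomials truncated modulo t^(k+1). *)

Section TruncatedPolynomials.
Context {R : comNzRingType}.
Local Open Scope ring_scope.
Implicit Types p q : {poly R}.

Definition eq_modXn n p q := forall i, (i < n)%N -> p`_i = q`_i.

Lemma eq_modXn_refl {n p} : eq_modXn n p p.
Proof. by []. Qed.

Lemma eq_modXnM {n p p' q q'} :
  eq_modXn n p p' -> eq_modXn n q q' -> eq_modXn n (p * q) (p' * q').
Proof.
move=> epp eqq i lt_in; rewrite !coefM; apply: eq_bigr => j _.
have le_ji : (j <= i)%N by rewrite -ltnS.
by rewrite epp ?eqq ?(leq_ltn_trans (leq_subr j i)) ?(leq_ltn_trans le_ji).
Qed.

Lemma eq_modXnB {n p p' q q'} :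
  eq_modXn n p p' -> eq_modXn n q q' -> eq_modXn n (p - q) (p' - q').
Proof. by move=> epp eqq i lt_in; rewrite !coefB epp ?eqq. Qed.

Lemma eq_modXnX {n p q} m : eq_modXn n p q -> eq_modXn n (p ^+ m) (q ^+ m).
Proof.
move=> epq; elim: m => [|m IHm]; first by move=> i _; rewrite !expr0.
by rewrite !exprS; apply: eq_modXnM.
Qed.

Lemma eq_modXn_subXn n p : eq_modXn n (p - 'X^n) p.
Proof. by move=> i lt_in; rewrite coefB coefXn ltn_eqF // subr0. Qed.

Definition geom n : {poly R} := \sum_(i < n) 'X^i.

Lemma coef_geom n i : (geom n)`_i = (i < n)%N%:R.
Proof.
have -> : geom n = \poly_(j < n) 1 by rewrite poly_def; apply: eq_bigr => j; rewrite scale1r.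
by rewrite coef_poly; case: (i < n)%N.
Qed.

Lemma eq_modXn_geom m n : (m <= n)%N -> eq_modXn m (geom n) (geom m).
Proof. by move=> le_mn i lt_im; rewrite !coef_geom lt_im (leq_trans lt_im). Qed.

Lemma mul_1subX_geom n : (1 - 'X) * geom n = 1 - 'X^n.
Proof.
rewrite -[in RHS](expr1n _ n) subrXX /geom; congr (_ * _).
by apply: eq_bigr => i _; rewrite expr1n mul1r.
Qed.

Lemma coef_1subXn n j : ((1 - 'X) ^+ n)`_j = (-1) ^+ j *+ 'C(n, j) :> R.
Proof.
elim: n j => [|n IHn] j.
  by rewrite expr0 coef1; case: j => [|j]; rewrite ?bin0n.
rewrite exprSr mulrBr mulr1 coefB coefMX.
case: j => [|j] /=; first by rewrite IHn subr0 !bin0.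
by rewrite !IHn binS mulrnDr exprS mulN1r !mulNrn.
Qed.

Lemma coef_1subXn_geom_eq0 a s k : (s < a)%N -> (a - s < k)%N ->
  ((1 - 'X) ^+ a * ((geom k.+1 - 1) * geom k.+1 ^+ s))`_k = 0.
Proof.
move=> lt_sa lt_ask.
have geom_pos : (1 - 'X) * (geom k.+1 - 1) = 'X - 'X^(k.+1).
  by rewrite mulrBr mulr1 mul_1subX_geom; ring.
have -> : (1 - 'X) ^+ a * ((geom k.+1 - 1) * geom k.+1 ^+ s) =
    (1 - 'X) ^+ (a - s.+1) * ('X - 'X^(k.+1)) * (1 - 'X^(k.+1)) ^+ s.
  rewrite -geom_pos -mul_1subX_geom -{1}(subnK lt_sa) exprD exprS exprMn; ring.
rewrite (eq_modXnM (eq_modXnM eq_modXn_refl (@eq_modXn_subXn k.+1 'X))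
                   (eq_modXnX s (@eq_modXn_subXn k.+1 1))) //.
rewrite expr1n mulr1 coefMX; case: k {geom_pos} lt_ask => //= k lt_ask.
by rewrite coef_1subXn bin_small ?mulr0n //; lia.
Qed.

Lemma coef_prod_sum_Xn (I : finType) n (F : I -> pred 'I_n.+1) :
  (\prod_i \sum_(j | F i j) 'X^j : {poly R})`_n =
  #|[set f : {ffun I -> 'I_n.+1} | [forall i, F i (f i)] & \sum_i (f i : nat) == n]|%:R.
Proof.
rewrite bigA_distr_big_dep coef_sum -sum1_card natr_sum big_mkcond [RHS]big_mkcond /=.
apply: eq_bigr => f _; rewrite prodrXr coefXn !inE eq_sym.
by case: [forall i, F i (f i)]; case: (_ == n)%N.
Qed.

End TruncatedPolynomials.

Lemma big_option (R : Type) (idx : R) (op : Monoid.com_law idx) (T : finType)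
    (F : option T -> R) :
  \big[op/idx]_(o : option T) F o = op (F None) (\big[op/idx]_(x : T) F (Some x)).
Proof.
rewrite (bigD1 None) //=; congr (op _ _).
rewrite (reindex_omap Some id) //=; last by case.
by apply: eq_bigl => x; rewrite eqxx.
Qed.

Lemma independentP (T : finType) (e : rel T) (A : {set T}) :
  reflect {in A &, forall x y, ~~ e x y} (independent e A).
Proof.
apply: (iffP forall_inP) => [indA x y xA yA | indA x xA].
  exact: (forall_inP (indA x xA) y yA).
by apply/forall_inP => y yA; apply: indA.
Qed.

Lemma leq_card_alpha (T : finType) (e : rel T) (A : {set T}) :
  independent e A -> #|A| <= alpha e.
Proof. exact: leq_bigmax_cond. Qed.

Definition standard (T : finType) (e : rel T) (m : T -> nat) : bool :=
  [forall x, forall y, e x y ==> (m x == 0) || (m y == 0)].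

Definition standard_monomials (T : finType) (e : rel T) n :=
  [set m : {ffun T -> 'I_n.+1} | (\sum_x (m x : nat) == n) & standard e (fun x => m x)].

Lemma eq_standard (T : finType) (e : rel T) (m1 m2 : T -> nat) :
  m1 =1 m2 -> standard e m1 = standard e m2.
Proof.
by move=> eq_m; apply: eq_forallb => x; apply: eq_forallb => y; rewrite !eq_m.
Qed.

Lemma hilb_funE (T : finType) (e : rel T) n : hilb_fun e n = #|standard_monomials e n|.
Proof. by []. Qed.

Section Suspension.
Variables (T : finType) (e : rel T) (C : {set T}).
Local Notation H := (suspension e C).

Lemma alpha_le_suspension : alpha e <= alpha H.
Proof.
apply/bigmax_leqP => A /independentP indA.
rewrite -(card_imset _ (@Some_inj _)); apply: leq_card_alpha.
by apply/independentP => _ _ /imsetP[x xA ->] /imsetP[y yA ->]; apply: indA.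
Qed.

Lemma alpha_suspension_le : alpha H <= maxn (alpha e) #|~: C|.+1.
Proof.
apply/bigmax_leqP => B /independentP indB; rewrite leq_max.
have [NB | NnB] := boolP (None \in B); apply/orP; [right | left].
  apply: (@leq_trans #|None |: (Some @: ~: C)|).
    apply/subset_leq_card/subsetP => -[x|] xB; rewrite !inE //.
    by rewrite mem_imset ?inE ?orbT //; [apply: (indB _ _ NB xB) | apply: Some_inj].
  by rewrite cardsU1 (card_imset _ (@Some_inj _)) -add1n leq_add2r leq_b1.
apply: (@leq_trans #|Some @: [set x | Some x \in B]|).
  apply/subset_leq_card/subsetP => -[x|] xB; last by rewrite xB in NnB.
  by apply/imsetP; exists x; rewrite ?inE.
rewrite (card_imset _ (@Some_inj _)); apply: leq_card_alpha.
by apply/independentP => x y; rewrite !inE; apply: indB.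
Qed.

Lemma alpha_suspension : #|~: C| < alpha e -> alpha H = alpha e.
Proof.
move=> lt_Sa; apply/eqP; rewrite eqn_leq alpha_le_suspension andbT.
by rewrite -(maxn_idPl lt_Sa) alpha_suspension_le.
Qed.

Lemma standard_suspension (m : option T -> nat) :
  standard H m =
  standard e (m \o Some) && ((m None == 0) || [forall x in C, m (Some x) == 0]).
Proof.
apply/idP/andP => [stdH | [stdG apex0]].
  split.
    by apply/forallP => x; apply/forallP => y; apply: (forallP (forallP stdH (Some x))).
  have [//|mN /=] := eqVneq (m None) 0; apply/forall_inP => x xC.
  by have /implyP/(_ xC) := forallP (forallP stdH None) (Some x); rewrite (negPf mN).
apply/forallP => -[x|]; apply/forallP => -[y|]; apply/implyP => //= exy.
  exact: implyP (forallP (forallP stdG x) y) exy.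
all: by case/orP: apex0 => [-> | /forall_inP m0]; rewrite ?m0 ?orbT.
Qed.

Lemma standard_vanishing_on_cover (m : T -> nat) :
  vertex_cover e C -> [forall x in C, m x == 0] -> standard e m.
Proof.
move=> coverC /forall_inP m0; apply/forallP => x; apply/forallP => y; apply/implyP => exy.
by case/orP: (coverC _ _ exy) => [/m0 -> | /m0 ->]; rewrite ?orbT.
Qed.

Definition extend0 n (m : {ffun T -> 'I_n.+1}) : {ffun option T -> 'I_n.+1} :=
  [ffun o => if o is Some x then m x else ord0].

Lemma extend0_inj n : injective (@extend0 n).
Proof.
move=> m1 m2 /ffunP eq_m; apply/ffunP => x.
by have := eq_m (Some x); rewrite !ffunE.
Qed.

Lemma card_standard_suspension_apex0 n :
  #|standard_monomials H n :&: [set m : {ffun option T -> 'I_n.+1} | (m None : nat) == 0]|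
  = #|standard_monomials e n|.
Proof.
rewrite -(card_imset _ (@extend0_inj n)); apply: eq_card => m.
rewrite !inE standard_suspension big_option /=.
apply/idP/imsetP => [/andP[/and3P[sum_m std_m _] /eqP mN0] | [m' m'_std ->]].
  exists [ffun x => m (Some x)].
    rewrite inE; under eq_bigr do rewrite ffunE.
    rewrite mN0 add0n in sum_m.
    rewrite sum_m (@eq_standard _ _ _ ((fun o => m o) \o Some)) // => x.
    by rewrite ffunE.
  by apply/ffunP => -[x|]; rewrite !ffunE //; apply: val_inj.
move: m'_std; rewrite inE => /andP[sum_m' std_m'].
rewrite !ffunE eqxx andbT /= add0n.
under eq_bigr do rewrite ffunE.
rewrite sum_m' (@eq_standard _ _ _ (fun x => m' x)) ?std_m' // => x.
by rewrite /= ffunE.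
Qed.

Definition apex_monomials n := [set m : {ffun option T -> 'I_n.+1} |
  [&& \sum_o (m o : nat) == n, (m None : nat) != 0
    & [forall x in C, (m (Some x) : nat) == 0]]].

Lemma hilb_fun_suspension n :
  vertex_cover e C -> hilb_fun H n = hilb_fun e n + #|apex_monomials n|.
Proof.
move=> coverC; rewrite !hilb_funE -card_standard_suspension_apex0.
rewrite -(cardsID [set m : {ffun option T -> 'I_n.+1} | (m None : nat) == 0]
                  (standard_monomials H n)).
congr (_ + _); apply: eq_card => m; rewrite !inE standard_suspension.
have [_|_] /= := eqVneq (m None : nat) 0; first by rewrite andbF.
case: (_ == n) => //=; apply/andP/idP => [[] // | m0]; split=> //.
exact: standard_vanishing_on_cover.
Qed.

Local Open Scope ring_scope.

Lemma card_apex_monomials (R : comNzRingType) n :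
  (#|apex_monomials n|%:R : R) = ((geom n.+1 - 1) * geom n.+1 ^+ #|~: C|)`_n.
Proof.
pose F o (j : 'I_n.+1) :=
  if o is Some x then (x \notin C) || (j == 0 :> nat) else j != 0 :> nat.
have -> : (geom n.+1 - 1) * geom n.+1 ^+ #|~: C| = \prod_o \sum_(j | F o j) 'X^j :> {poly R}.
  rewrite big_option /=; congr (_ * _).
    by rewrite /geom (bigD1 ord0) // expr0 addrC addKr.
  rewrite (eq_bigr (fun x => if x \notin C then geom n.+1 else 1)) => [|x _].
    by rewrite -big_mkcond prodr_const; congr (_ ^+ _); apply: eq_card => x; rewrite !inE.
  case: (x \notin C); first exact: eq_bigl.
  by rewrite (big_pred1 ord0) // => j; rewrite -val_eqE.
rewrite coef_prod_sum_Xn; congr (_%:R); apply: eq_card => m.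
rewrite !inE andbC; congr (_ && _).
apply/andP/forallP => [[mN /forall_inP m0] [x|] // | allF].
  by rewrite /=; case: (boolP (x \in C)) => // /m0 ->; rewrite orbT.
split; first exact: allF None.
by apply/forall_inP => x xC; have := allF (Some x); rewrite /= xC.
Qed.

Lemma sum_apex_monomials_eq0 a k : (0 < #|~: C| < a)%N -> (a <= k)%N ->
  \sum_(j < k.+1) (-1) ^+ j * (('C(a, j) * #|apex_monomials (k - j)|)%N)%:Z = 0.
Proof.
move=> /andP[S_gt0 lt_Sa] le_ak.
have lt_aSk : (a - #|~: C| < k)%N by lia.
rewrite -[RHS](coef_1subXn_geom_eq0 lt_Sa lt_aSk) coefM; apply: eq_bigr => j _.
rewrite coef_1subXn -mulr_natr PoszM natz mulrA; congr (_ * _).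
have le_kj : ((k - j).+1 <= k.+1)%N by rewrite ltnS leq_subr.
have trunc_k := eq_modXnM (eq_modXnB (eq_modXn_geom le_kj) eq_modXn_refl)
                         (eq_modXnX #|~: C| (eq_modXn_geom le_kj)).
by rewrite -natz card_apex_monomials trunc_k.
Qed.

Lemma hcoef_suspension k :
  vertex_cover e C -> (0 < #|~: C| < alpha e)%N -> (alpha e <= k)%N ->
  hcoef H k = hcoef e k.
Proof.
move=> coverC /andP[S_gt0 lt_Sa] le_ak; rewrite /hcoef alpha_suspension //.
under eq_bigr do rewrite hilb_fun_suspension // mulnDr PoszD mulrDr.
by rewrite big_split /= sum_apex_monomials_eq0 ?S_gt0 // addr0.
Qed.

End Suspension.

Lemma pseudo_gor_star_tail (T T' : finType) (e : rel T) (e' : rel T') :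
  alpha e = alpha e' -> (forall k, alpha e <= k -> hcoef e k = hcoef e' k) ->
  pseudo_gor_star e <-> pseudo_gor_star e'.
Proof.
move=> alphaE hcoefE; rewrite /pseudo_gor_star -alphaE hcoefE //.
split=> -[top tail]; split=> // k lt_ak.
  by rewrite -hcoefE ?tail ?(ltnW lt_ak).
by rewrite hcoefE ?tail ?(ltnW lt_ak).
Qed.

Theorem theorem5p3 (T : finType) (e : rel T)
  (e_sym : symmetric e) (e_irr : irreflexive e) (C : {set T}) :
  2 <= alpha e ->
  vertex_cover e C ->
  1 <= #|~: C| <= alpha e - 1 ->
  (pseudo_gor_star e <-> pseudo_gor_star (suspension e C)).
Proof.
move=> _ coverC /andP[S_gt0 S_le].
have lt_Sa : #|~: C| < alpha e by lia.
apply: pseudo_gor_star_tail => [|k le_ak]; first by rewrite alpha_suspension.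
by rewrite hcoef_suspension ?S_gt0.
Qed.
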